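(* The family $\{\varphi_{[1],0}[\cdot-2l]\}_{l=0}^{N/2-1}\cup\{\varphi_{[1],1}[\cdot-2l]\}_{l=0}^{N/2-1}$ is an orthonormal basis of $\Pi[N]$. Consequently, for $\mu\in\{0,1\}$, letting $\mathcal C^{\mu}$ be the linear span of $\{\varphi_{[1],\mu}[\cdot-2l]\}_{l=0}^{N/2-1}$, the space $\mathcal C^{1}$ is the orthogonal complement of $\mathcal C^{0}$ in $\Pi[N]$, and the orthogonal projection of any $x\in\Pi[N]$ onto $\mathcal C^{\mu}$ is $$x^{\mu}[k]=\sum_{l=0}^{N/2-1}c^{\mu}[l]\,\varphi_{[1],\mu}[k-2l],\qquad c^{\mu}[l]=\langle x,\varphi_{[1],\mu}[\cdot-2l]\rangle=\sum_{k=0}^{N-1}\varphi_{[1],\mu}[k-2l]\,x[k].$$ Here the DFTs are explicitly $\hat\varphi_{[1],0}[n]=-i\beta[n]$ ($0<n<N/2$), $i\beta[n]$ ($N/2<n<N$), $\sqrt2$ ($n=0$), $0$ ($n=N/2$); and $\hat\varphi_{[1],1}[n]=-i\alpha[n]$ ($0<n<N/2$), $i\alpha[n]$ ($N/2<n<N$), $0$ ($n=0$), $-\sqrt2$ ($n=N/2$).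
   Context: Let $N=2^{J}$ with $J\ge 1$ an integer and $\omega=e^{2\pi i/N}$. $\Pi[N]$ denotes the real vector space of real-valued $N$-periodic sequences $x=\{x[k]\}_{k\in\mathbb Z}$, with inner product $\langle x,y\rangle=\sum_{k=0}^{N-1}x[k]y[k]$. The DFT of an $N$-periodic sequence is $\hat x[n]=\sum_{k=0}^{N-1}x[k]\omega^{-kn}$, with inverse $x[k]=\frac1N\sum_{n=0}^{N-1}\hat x[n]\omega^{kn}$. Fix an integer $r\ge1$; let $U[n]=\tfrac12\big(\cos^{4r}\tfrac{\pi n}{N}+\sin^{4r}\tfrac{\pi n}{N}\big)$, $\beta[n]=\cos^{2r}\tfrac{\pi n}{N}/\sqrt{U[n]}$, $\alpha[n]=\omega^{n}\sin^{2r}\tfrac{\pi n}{N}/\sqrt{U[n]}$. The first-level wavelet packets $\psi_{[1],0},\psi_{[1],1}\in\Pi[N]$ have DFTs $\hat\psi_{[1],0}=\beta$, $\hat\psi_{[1],1}=\alpha$. Known fact (may be assumed): $\{\psi_{[1],\mu}[\cdot-2l]:\mu\in\{0,1\},\,0\le l<N/2\}$ is an orthonormal basis of $\Pi[N]$. The complementary wavelet packets $\varphi_{[1],\mu}\in\Pi[N]$ are defined by DFT $\hat\varphi_{[1],\mu}[n]=-i\hat\psi_{[1],\mu}[n]$ for $0<n<N/2$, $=i\hat\psi_{[1],\mu}[n]$ for $N/2<n<N$, and $=\hat\psi_{[1],\mu}[n]$ for $n\in\{0,N/2\}$ (indices mod $N$). *)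

From Stdlib Require Import Reals Lra Lia ZArith Bool.
Open Scope R_scope.

Definition Cx : Type := (R * R)%type.
Definition Cadd (z w : Cx) : Cx := (fst z + fst w, snd z + snd w).
Definition Cmul (z w : Cx) : Cx :=
  (fst z * fst w - snd z * snd w, fst z * snd w + snd z * fst w).
Definition Cscal (a : R) (z : Cx) : Cx := (a * fst z, a * snd z).
Definition Czero : Cx := (0, 0).
Definition Cmul_negi (z : Cx) : Cx := (snd z, - fst z).
Definition Cmul_i (z : Cx) : Cx := (- snd z, fst z).
Definition cis (t : R) : Cx := (cos t, sin t).

Fixpoint rsum (n : nat) (f : nat -> R) : R :=
  match n with O => 0 | S m => rsum m f + f m end.
Fixpoint csum (n : nat) (f : nat -> Cx) : Cx :=
  match n with O => Czero | S m => Cadd (csum m f) (f m) end.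

Definition Nn (J : nat) : nat := (2 ^ J)%nat.
Definition NZ (J : nat) : Z := Z.of_nat (Nn J).
Definition NR (J : nat) : R := INR (Nn J).
Definition Nhalf (J : nat) : nat := (Nn J / 2)%nat.

Definition omega_pow (J : nat) (m : Z) : Cx := cis (2 * PI * IZR m / NR J).

(* Pi[N]: real-valued N-periodic sequences indexed by Z *)
Definition periodic (J : nat) (x : Z -> R) : Prop :=
  forall k : Z, x (k + NZ J)%Z = x k.

Definition ip (J : nat) (x y : Z -> R) : R :=
  rsum (Nn J) (fun k => x (Z.of_nat k) * y (Z.of_nat k)).

Definition Ufun (J r : nat) (n : Z) : R :=
  / 2 * (cos (PI * IZR n / NR J) ^ (4 * r) + sin (PI * IZR n / NR J) ^ (4 * r)).
Definition beta (J r : nat) (n : Z) : R :=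
  cos (PI * IZR n / NR J) ^ (2 * r) / sqrt (Ufun J r n).
Definition alpha (J r : nat) (n : Z) : Cx :=
  Cscal (sin (PI * IZR n / NR J) ^ (2 * r) / sqrt (Ufun J r n)) (omega_pow J n).

(* DFTs of the first-level wavelet packets psi_[1],mu  (mu = 0 or 1) *)
Definition psihat (J r mu : nat) (n : Z) : Cx :=
  if Nat.eqb mu 0 then (beta J r n, 0) else alpha J r n.

(* DFTs of the complementary wavelet packets phi_[1],mu (indices mod N) *)
Definition phihat (J r mu : nat) (n : Z) : Cx :=
  let m := Z.modulo n (NZ J) in
  let h := Z.of_nat (Nhalf J) in
  if andb (0 <? m)%Z (m <? h)%Z then Cmul_negi (psihat J r mu n)
  else if (h <? m)%Z then Cmul_i (psihat J r mu n)
  else psihat J r mu n.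

Definition idft (J : nat) (yhat : Z -> Cx) (k : Z) : Cx :=
  Cscal (/ NR J) (csum (Nn J) (fun n => Cmul (yhat (Z.of_nat n)) (omega_pow J (k * Z.of_nat n)))).

(* The wavelet packets as real sequences (real parts of the inverse DFT;
   the theorem below also asserts that the imaginary parts of phi vanish). *)
Definition psi (J r mu : nat) (k : Z) : R := fst (idft J (psihat J r mu) k).
Definition phi (J r mu : nat) (k : Z) : R := fst (idft J (phihat J r mu) k).

Definition shift2 (f : Z -> R) (l : nat) : Z -> R :=
  fun k => f (k - 2 * Z.of_nat l)%Z.

Definition is_ONB2 (J : nat) (f : nat -> Z -> R) : Prop :=
  (forall mu l, (mu <= 1)%nat -> periodic J (shift2 (f mu) l)) /\
  (forall mu mu' l l', (mu <= 1)%nat -> (mu' <= 1)%nat ->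
     (l < Nhalf J)%nat -> (l' < Nhalf J)%nat ->
     ip J (shift2 (f mu) l) (shift2 (f mu') l') =
       (if andb (Nat.eqb mu mu') (Nat.eqb l l') then 1 else 0)) /\
  (forall x : Z -> R, periodic J x ->
     exists c0 c1 : nat -> R, forall k : Z,
       x k = rsum (Nhalf J) (fun l => c0 l * shift2 (f 0%nat) l k)
           + rsum (Nhalf J) (fun l => c1 l * shift2 (f 1%nat) l k)).

Definition in_C (J r mu : nat) (x : Z -> R) : Prop :=
  exists c : nat -> R, forall k : Z,
    x k = rsum (Nhalf J) (fun l => c l * phi J r mu (k - 2 * Z.of_nat l)%Z).

Definition coef (J r mu : nat) (x : Z -> R) (l : nat) : R :=
  rsum (Nn J) (fun k => phi J r mu (Z.of_nat k - 2 * Z.of_nat l)%Z * x (Z.of_nat k)).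
Definition proj (J r mu : nat) (x : Z -> R) (k : Z) : R :=
  rsum (Nhalf J) (fun l => coef J r mu x l * phi J r mu (k - 2 * Z.of_nat l)%Z).

(* The DFT of phi_mu is that of psi_mu multiplied by a unimodular factor c(n) in {-i, i, 1}
   which satisfies c(N - n) = conj c(n) and does not depend on mu.  Hence:
   1. Hermitian symmetry of the spectrum is preserved, so phi_mu is real (a Hermitian spectrum
      has a real inverse DFT, by orthogonality of the characters n |-> omega^(kn)).
   2. By the Parseval/correlation formula, <y_mu[. - a], y_nu[. - b]> only depends on the
      products yhat_mu(n) conj(yhat_nu(n)), which are the same for phi and psi.  So the Gram
      matrix of the shifts phi_mu[. - 2l] equals that of the psi-shifts: they are orthonormal.
   3. N orthonormal vectors lying in the span of N orthonormal vectors span the same space,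
      because a square matrix with orthonormal columns has orthonormal rows.  So the
      phi-shifts form an orthonormal basis of Pi[N].
   4. For any orthonormal basis made of two shift families, the span of one family is the
      orthogonal complement of the span of the other, and c[l] = <x, f[. - 2l]> are the
      coefficients of the orthogonal projection. *)

From Stdlib Require Import Reals Lra Lia ZArith.
Open Scope R_scope.

(* The only matrix fact used: A^T A = 1 implies A A^T = 1 for a square real matrix A,
   stated for the coefficients a i j of A through the finite sums rsum. *)
From mathcomp Require all_boot all_algebra Rstruct.
Module SquareMatrix.
Import all_boot all_algebra Rstruct.
Import GRing.Theory.

Lemma rsum_big (n : nat) (f : nat -> R) : rsum n f = (\sum_(i < n) f i)%R.
Proof. by elim: n => [|n IH] /=; rewrite ?big_ord0 // big_ord_recr /= IH. Qed.

Local Open Scope R_scope.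

Lemma rows_orthonormal (n : nat) (a : nat -> nat -> R) :
  (forall j k, (j < n)%coq_nat -> (k < n)%coq_nat ->
     rsum n (fun i => a i j * a i k) = if Nat.eqb j k then 1 else 0) ->
  forall i i', (i < n)%coq_nat -> (i' < n)%coq_nat ->
     rsum n (fun j => a i j * a i' j) = if Nat.eqb i i' then 1 else 0.
Proof.
Local Open Scope ring_scope.
move=> Hcol i i' /ssrnat.ltP hi /ssrnat.ltP hi'.
have eqb_ord (u v : 'I_n) : Nat.eqb u v = (u == v).
  by case: (PeanoNat.Nat.eqb_spec u v) => [/val_inj ->|ne]; [rewrite eqxx | case: eqP => // E; case: ne; rewrite E].
pose A := \matrix_(i < n, j < n) a i j.
have AtA : A^T *m A = 1%:M.
  apply/matrixP => j k; rewrite !mxE.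
  under eq_bigr => l _ do rewrite !mxE.
  rewrite -(rsum_big n (fun i => a i j * a i k)) Hcol ?eqb_ord;
    [by case: (j == k) | exact/ssrnat.ltP ..].
have := congr1 (fun M : 'M[R]_n => M (Ordinal hi) (Ordinal hi')) (mulmx1C AtA).
rewrite /= !mxE; under eq_bigr => l _ do rewrite !mxE.
rewrite -(rsum_big n (fun j => a i j * a i' j)) => ->.
by rewrite -eqb_ord /=; case: (Nat.eqb i i').
Qed.
End SquareMatrix.

From Coquelicot Require Import Coquelicot.
Open Scope R_scope.

Lemma rsum_ext n f g : (forall i, (i < n)%nat -> f i = g i) -> rsum n f = rsum n g.
Proof. induction n; intros H; simpl; auto. rewrite IHn, H; auto. Qed.
Lemma rsum_add n f g : rsum n (fun i => f i + g i) = rsum n f + rsum n g.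
Proof. induction n; simpl. ring. rewrite IHn; ring. Qed.
Lemma rsum_scal n c f : rsum n (fun i => c * f i) = c * rsum n f.
Proof. induction n; simpl. ring. rewrite IHn; ring. Qed.
Lemma rsum_zero n : rsum n (fun _ => 0) = 0.
Proof. induction n; simpl; auto. rewrite IHn; ring. Qed.
Lemma rsum_swap n m f :
  rsum n (fun i => rsum m (fun j => f i j)) = rsum m (fun j => rsum n (fun i => f i j)).
Proof. induction n; simpl. now rewrite rsum_zero. now rewrite IHn, <- rsum_add. Qed.
Lemma rsum_kronecker n (x : nat -> R) i : (i < n)%nat ->
  rsum n (fun j => x j * (if Nat.eqb i j then 1 else 0)) = x i.
Proof.
  induction n; intros H; [lia|]. simpl. destruct (Nat.eqb_spec i n) as [<-|ne].
  - rewrite (rsum_ext _ _ (fun _ => 0)), rsum_zero; [ring|].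
    intros j Hj. destruct (Nat.eqb_spec i j); [lia|ring].
  - rewrite IHn by lia. ring.
Qed.
Lemma rsum_split a b f : rsum (a + b) f = rsum a f + rsum b (fun i => f (a + i)%nat).
Proof.
  induction b; simpl. rewrite Nat.add_0_r; ring.
  rewrite Nat.add_succ_r; simpl. rewrite IHb; ring.
Qed.

(* The complex numbers Cx of the definitions are Coquelicot's C; we transport the operations
   in order to use its field structure (ring, Cinv, Cconj). *)
Ltac cring :=
  change Cadd with Cplus; change Cmul with Cmult;
  match goal with |- @eq _ ?a ?b => change (@eq C a b) end; ring.
Lemma CaddE z w : Cadd z w = Cplus z w. Proof. reflexivity. Qed.
Lemma CmulE z w : Cmul z w = Cmult z w. Proof. reflexivity. Qed.
Lemma CscalE a z : Cscal a z = Cmult (RtoC a) z.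
Proof. destruct z; unfold Cscal, Cmult, RtoC; simpl; f_equal; ring. Qed.
Lemma Cconj_RtoC x : Cconj (RtoC x) = RtoC x.
Proof. unfold Cconj, RtoC; simpl; f_equal; ring. Qed.

Lemma csum_ext n f g : (forall i, (i < n)%nat -> f i = g i) -> csum n f = csum n g.
Proof. induction n; intros H; cbn [csum]; auto. rewrite IHn, H; auto. Qed.
Lemma csum_fst n f : fst (csum n f) = rsum n (fun i => fst (f i)).
Proof. induction n; simpl; auto. rewrite IHn; auto. Qed.
Lemma csum_mul_l n c f : Cmult c (csum n f) = csum n (fun i => Cmult c (f i)).
Proof. induction n; cbn [csum]; [unfold Czero; change (0, 0) with (RtoC 0)|rewrite <- IHn]; cring. Qed.
Lemma csum_mul_r n c f : Cmult (csum n f) c = csum n (fun i => Cmult (f i) c).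
Proof. rewrite Cmult_comm, csum_mul_l. apply csum_ext; intros; apply Cmult_comm. Qed.
Lemma csum_add n f g : csum n (fun i => Cplus (f i) (g i)) = Cplus (csum n f) (csum n g).
Proof.
  induction n; cbn [csum]; [unfold Czero; change (0, 0) with (RtoC 0)|rewrite !CaddE, IHn]; cring.
Qed.
Lemma csum_zero n : csum n (fun _ => RtoC 0) = RtoC 0.
Proof. induction n; cbn [csum]; auto. rewrite IHn; cring. Qed.
Lemma csum_swap n m f :
  csum n (fun i => csum m (fun j => f i j)) = csum m (fun j => csum n (fun i => f i j)).
Proof.
  induction n; cbn [csum]. now rewrite csum_zero.
  rewrite IHn, CaddE, <- csum_add. reflexivity.
Qed.
Lemma csum_kronecker n (x : nat -> C) i : (i < n)%nat ->
  csum n (fun j => if Nat.eqb j i then x j else RtoC 0) = x i.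
Proof.
  induction n; intros H; [lia|]. cbn [csum]. destruct (Nat.eqb_spec n i) as [->|ne].
  - rewrite (csum_ext _ _ (fun _ => RtoC 0)), csum_zero, CaddE; [cring|].
    intros j Hj. destruct (Nat.eqb_spec j i); [lia|auto].
  - rewrite IHn by lia. rewrite CaddE. cring.
Qed.
Lemma csum_conj n f : Cconj (csum n f) = csum n (fun i => Cconj (f i)).
Proof.
  induction n; cbn [csum]. unfold Cconj, Czero; simpl; f_equal; ring.
  rewrite CaddE, Cplus_conj, IHn; auto.
Qed.
Lemma csum_shift m h : csum (S m) h = Cadd (h 0%nat) (csum m (fun i => h (S i))).
Proof.
  induction m. cbn [csum]. cring.
  change (csum (S (S m)) h) with (Cadd (csum (S m) h) (h (S m))). rewrite IHm.
  change (csum (S m) (fun i => h (S i))) with (Cadd (csum m (fun i => h (S i))) (h (S m))). cring.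
Qed.
Lemma csum_rev m u : csum m (fun i => u (m - 1 - i)%nat) = csum m u.
Proof.
  induction m. reflexivity. rewrite csum_shift.
  replace (S m - 1 - 0)%nat with m by lia.
  rewrite (csum_ext m _ (fun i => u (m - 1 - i)%nat)) by (intros; f_equal; lia).
  rewrite IHm. cbn [csum]. cring.
Qed.
Lemma csum_reflect N g : (0 < N)%nat -> csum N (fun n => g ((N - n) mod N)%nat) = csum N g.
Proof.
  intros HN. destruct N as [|M]; [lia|]. rewrite !csum_shift.
  rewrite Nat.sub_0_r, Nat.Div0.mod_same. f_equal.
  rewrite (csum_ext M _ (fun i => (fun j => g (S j)) (M - 1 - i)%nat)).
  - apply (csum_rev M (fun j => g (S j))).
  - intros i Hi. f_equal. rewrite Nat.mod_small; lia.
Qed.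

Lemma Nn_pos J : (0 < Nn J)%nat.
Proof. unfold Nn. apply Nat.neq_0_lt_0, Nat.pow_nonzero; lia. Qed.
Lemma Nn_half J : (1 <= J)%nat -> Nn J = (2 * Nhalf J)%nat.
Proof.
  intros H. unfold Nhalf, Nn. destruct J; [lia|].
  rewrite Nat.pow_succ_r', Nat.mul_comm, Nat.div_mul; lia.
Qed.
Lemma Nhalf_pos J : (1 <= J)%nat -> (0 < Nhalf J)%nat.
Proof. intros H. pose proof (Nn_pos J). pose proof (Nn_half J H). lia. Qed.
Lemma NR_pos J : 0 < NR J.
Proof. unfold NR. apply lt_0_INR, Nn_pos. Qed.
Lemma NR_NZ J : NR J = IZR (NZ J).
Proof. unfold NR, NZ. apply INR_IZR_INZ. Qed.

Lemma cis_add a b : Cmult (cis a) (cis b) = cis (a + b).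
Proof. unfold cis, Cmult; simpl. rewrite cos_plus, sin_plus. f_equal; ring. Qed.
Lemma cis_period x m : cis (x + 2 * PI * IZR m) = cis x.
Proof.
  assert (Hsin : sin (PI * IZR m) = 0) by (apply sin_eq_0_1; exists m; ring).
  unfold cis. replace (2 * PI * IZR m) with (2 * (PI * IZR m)) by ring.
  rewrite cos_plus, sin_plus, cos_2a_sin, sin_2a, Hsin. f_equal; ring.
Qed.

Lemma omega_add J a b : Cmult (omega_pow J a) (omega_pow J b) = omega_pow J (a + b).
Proof. unfold omega_pow. rewrite cis_add, plus_IZR. f_equal. field. apply Rgt_not_eq, NR_pos. Qed.
Lemma omega_0 J : omega_pow J 0 = RtoC 1.
Proof.
  unfold omega_pow, cis, RtoC. replace (2 * PI * IZR 0 / NR J) with 0.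
  - rewrite cos_0, sin_0; auto.
  - simpl; field. apply Rgt_not_eq, NR_pos.
Qed.
Lemma omega_conj J a : Cconj (omega_pow J a) = omega_pow J (- a).
Proof.
  unfold omega_pow, cis, Cconj; simpl. rewrite opp_IZR.
  replace (2 * PI * - IZR a / NR J) with (- (2 * PI * IZR a / NR J)).
  - rewrite cos_neg, sin_neg; auto.
  - field. apply Rgt_not_eq, NR_pos.
Qed.
Lemma omega_period J a m : omega_pow J (a + NZ J * m) = omega_pow J a.
Proof.
  unfold omega_pow. rewrite <- (cis_period (2 * PI * IZR a / NR J) m). f_equal.
  rewrite plus_IZR, mult_IZR, <- NR_NZ. field. apply Rgt_not_eq, NR_pos.
Qed.

Lemma omega_ne1 J d : (0 < Z.abs d < NZ J)%Z -> omega_pow J d <> RtoC 1.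
Proof.
  intros Hd E. unfold omega_pow, cis, RtoC in E. injection E; intros Es Ec.
  destruct (sin_eq_0_0 _ Es) as [k Hk].
  assert (HN := NR_pos J). rewrite NR_NZ in HN, Hk, Ec.
  assert (E2 : IZR (2 * d) = IZR (k * NZ J)).
  { rewrite !mult_IZR. apply Rmult_eq_reg_r with (PI / IZR (NZ J)).
    - replace (IZR 2 * IZR d * (PI / IZR (NZ J))) with (2 * PI * IZR d / IZR (NZ J)) by (field; lra).
      rewrite Hk. field. lra.
    - apply Rgt_not_eq, Rdiv_lt_0_compat; [apply PI_RGT_0|lra]. }
  apply eq_IZR in E2.
  assert (k = 1 \/ k = -1)%Z as [-> | ->] by nia; rewrite Hk in Ec.
  - rewrite Rmult_1_l, cos_PI in Ec. lra.
  - replace (IZR (-1) * PI) with (- PI) in Ec by (simpl; ring). rewrite cos_neg, cos_PI in Ec. lra.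
Qed.

Lemma omega_geom J d n :
  Cmult (Cminus (omega_pow J d) (RtoC 1)) (csum n (fun k => omega_pow J (Z.of_nat k * d)))
  = Cminus (omega_pow J (Z.of_nat n * d)) (RtoC 1).
Proof.
  induction n; cbn [csum].
  - rewrite omega_0. unfold Czero. change (0, 0) with (RtoC 0). cring.
  - change Cadd with Cplus. rewrite Cmult_plus_distr_l, IHn.
    replace (omega_pow J (Z.of_nat (S n) * d))
      with (Cmult (omega_pow J d) (omega_pow J (Z.of_nat n * d))).
    + cring.
    + rewrite omega_add. f_equal. lia.
Qed.

Lemma character_orthogonality J n n' : (n < Nn J)%nat -> (n' < Nn J)%nat ->
  csum (Nn J) (fun k => omega_pow J (Z.of_nat k * (Z.of_nat n - Z.of_nat n'))) =
  if Nat.eqb n n' then RtoC (NR J) else RtoC 0.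
Proof.
  intros Hn Hn'. destruct (Nat.eqb_spec n n') as [<-|ne].
  - rewrite (csum_ext _ _ (fun _ => RtoC 1)).
    + unfold NR. clear Hn Hn'. induction (Nn J) as [|m IH]; [reflexivity|].
      cbn [csum]. rewrite IH, S_INR. unfold RtoC, Cadd; simpl. f_equal; ring.
    + intros i _. rewrite <- (omega_0 J). f_equal. lia.
  - set (d := (Z.of_nat n - Z.of_nat n')%Z).
    assert (Hd : (0 < Z.abs d < NZ J)%Z) by (unfold d, NZ; lia).
    assert (H := omega_geom J d (Nn J)).
    rewrite <- (Z.add_0_l (Z.of_nat (Nn J) * d)) in H.
    change (Z.of_nat (Nn J)) with (NZ J) in H. rewrite omega_period, omega_0 in H.
    assert (Hne : Cminus (omega_pow J d) (RtoC 1) <> RtoC 0).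
    { intros E. apply (omega_ne1 J d Hd).
      replace (omega_pow J d) with (Cplus (Cminus (omega_pow J d) (RtoC 1)) (RtoC 1)) by cring.
      rewrite E. cring. }
    apply (f_equal (Cmult (Cinv (Cminus (omega_pow J d) (RtoC 1))))) in H.
    rewrite Cmult_assoc, Cinv_l, Cmult_1_l in H by exact Hne.
    rewrite H. cring.
Qed.

Lemma idft_period J f k : idft J f (k + NZ J) = idft J f k.
Proof.
  unfold idft. f_equal. apply csum_ext. intros n _. f_equal.
  replace ((k + NZ J) * Z.of_nat n)%Z with (k * Z.of_nat n + NZ J * Z.of_nat n)%Z by ring.
  apply omega_period.
Qed.

Definition hermitian (J : nat) (f : Z -> Cx) : Prop :=
  forall n, (n < Nn J)%nat -> f (Z.of_nat ((Nn J - n) mod Nn J)) = Cconj (f (Z.of_nat n)).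

(* A Hermitian spectrum has a real inverse DFT: the defining sum is its own conjugate. *)
Lemma idft_real J f : hermitian J f -> forall k, snd (idft J f k) = 0.
Proof.
  intros Hf k. unfold idft.
  set (S0 := csum (Nn J) _).
  assert (HS : Cconj S0 = S0).
  { unfold S0. rewrite csum_conj, <- (csum_reflect (Nn J)) by apply Nn_pos.
    apply csum_ext. intros n Hn. rewrite CmulE, Cmult_conj, omega_conj, Hf by exact Hn.
    rewrite Cconj_conj. change Cmul with Cmult. f_equal. destruct n as [|n].
    - rewrite Nat.sub_0_r, Nat.Div0.mod_same. f_equal. ring.
    - rewrite Nat.mod_small, Nat2Z.inj_sub by lia.
      replace (- (k * (Z.of_nat (Nn J) - Z.of_nat (S n))))%Z
        with (k * Z.of_nat (S n) + NZ J * - k)%Z by (unfold NZ; ring).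
      apply omega_period. }
  destruct S0 as [x y]. unfold Cconj in HS; simpl in HS. injection HS; intros.
  simpl. replace y with 0 by lra. ring.
Qed.

Lemma idft_product J f g k a b :
  Cmult (idft J f (k - a)) (Cconj (idft J g (k - b))) =
  Cmult (RtoC (/ NR J * / NR J)) (csum (Nn J) (fun n => csum (Nn J) (fun n' =>
    Cmult (Cmult (Cmult (f (Z.of_nat n)) (Cconj (g (Z.of_nat n'))))
                 (omega_pow J (- a * Z.of_nat n + b * Z.of_nat n')))
          (omega_pow J (k * (Z.of_nat n - Z.of_nat n')))))).
Proof.
  unfold idft. rewrite !CscalE, Cmult_conj, csum_conj, Cconj_RtoC.
  transitivity (Cmult (RtoC (/ NR J * / NR J))
    (Cmult (csum (Nn J) (fun n => Cmul (f (Z.of_nat n)) (omega_pow J ((k - a) * Z.of_nat n))))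
           (csum (Nn J) (fun n' => Cconj (Cmul (g (Z.of_nat n')) (omega_pow J ((k - b) * Z.of_nat n'))))))).
  { rewrite RtoC_mult. cring. }
  f_equal. rewrite csum_mul_r. apply csum_ext; intros n _. rewrite csum_mul_l. apply csum_ext; intros n' _.
  change Cmul with Cmult. rewrite Cmult_conj, omega_conj.
  transitivity (Cmult (Cmult (f (Z.of_nat n)) (Cconj (g (Z.of_nat n'))))
    (Cmult (omega_pow J ((k - a) * Z.of_nat n)) (omega_pow J (- ((k - b) * Z.of_nat n'))))).
  { cring. }
  rewrite omega_add, <- (Cmult_assoc (Cmult (f (Z.of_nat n)) (Cconj (g (Z.of_nat n'))))), omega_add.
  do 2 f_equal. ring.
Qed.

Lemma parseval J f g a b :
  (forall k, snd (idft J f k) = 0) -> (forall k, snd (idft J g k) = 0) ->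
  rsum (Nn J) (fun k => fst (idft J f (Z.of_nat k - a)) * fst (idft J g (Z.of_nat k - b))) =
  fst (Cmult (RtoC (/ NR J)) (csum (Nn J) (fun n =>
    Cmult (Cmult (f (Z.of_nat n)) (Cconj (g (Z.of_nat n)))) (omega_pow J ((b - a) * Z.of_nat n))))).
Proof.
  intros Hf Hg.
  set (X := fun n n' : nat => Cmult (Cmult (f (Z.of_nat n)) (Cconj (g (Z.of_nat n'))))
                                    (omega_pow J (- a * Z.of_nat n + b * Z.of_nat n'))).
  transitivity (fst (csum (Nn J) (fun k =>
    Cmult (idft J f (Z.of_nat k - a)) (Cconj (idft J g (Z.of_nat k - b)))))).
  { rewrite csum_fst. apply rsum_ext. intros k _.
    specialize (Hf (Z.of_nat k - a)%Z). specialize (Hg (Z.of_nat k - b)%Z).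
    destruct (idft J f _), (idft J g _). simpl in *. subst. ring. }
  f_equal. rewrite (csum_ext _ _ _ (fun k _ => idft_product J f g (Z.of_nat k) a b)).
  rewrite <- csum_mul_l, csum_swap.
  (* only the diagonal n = n' survives the summation over k *)
  rewrite (csum_ext (Nn J) _ (fun n => Cmult (X n n) (RtoC (NR J)))).
  2:{ intros n Hn. rewrite csum_swap.
      rewrite (csum_ext (Nn J) _ (fun n' => if Nat.eqb n' n then Cmult (X n n') (RtoC (NR J)) else RtoC 0)).
      - apply csum_kronecker; auto.
      - intros n' Hn'. rewrite <- csum_mul_l, character_orthogonality by auto.
        destruct (Nat.eqb_spec n n'), (Nat.eqb_spec n' n); subst; try lia; unfold X; cring. }
  rewrite <- csum_mul_r.
  rewrite (csum_ext _ (fun n => X n n) (fun n =>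
    Cmult (Cmult (f (Z.of_nat n)) (Cconj (g (Z.of_nat n)))) (omega_pow J ((b - a) * Z.of_nat n)))).
  2:{ intros; unfold X; do 2 f_equal; ring. }
  assert (HN := NR_pos J).
  replace (RtoC (NR J)) with (Cmult (RtoC (NR J)) (RtoC 1)) by cring.
  set (SS := csum (Nn J) _).
  transitivity (Cmult (Cmult (RtoC (/ NR J * / NR J)) (RtoC (NR J))) SS); [cring|].
  rewrite <- RtoC_mult. f_equal. f_equal. field. lra.
Qed.

Lemma angle_reflect J z : PI * IZR (NZ J - z) / NR J = PI - PI * IZR z / NR J.
Proof. rewrite minus_IZR, <- NR_NZ. field. apply Rgt_not_eq, NR_pos. Qed.
Lemma pow_even_opp x r : (- x) ^ (2 * r) = x ^ (2 * r).
Proof. rewrite !pow_sqr. f_equal. ring. Qed.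
Lemma pow_4_opp x r : (- x) ^ (4 * r) = x ^ (4 * r).
Proof. replace (4 * r)%nat with (2 * (2 * r))%nat by lia. apply pow_even_opp. Qed.

Lemma Ufun_reflect J r z : Ufun J r (NZ J - z) = Ufun J r z.
Proof. unfold Ufun. rewrite angle_reflect, sin_PI_x, Rtrigo_facts.cos_pi_minus, pow_4_opp. auto. Qed.
Lemma beta_reflect J r z : beta J r (NZ J - z) = beta J r z.
Proof. unfold beta. rewrite Ufun_reflect, angle_reflect, Rtrigo_facts.cos_pi_minus, pow_even_opp. auto. Qed.
Lemma alpha_reflect J r z : alpha J r (NZ J - z) = Cconj (alpha J r z).
Proof.
  unfold alpha. rewrite Ufun_reflect, angle_reflect, sin_PI_x.
  replace (NZ J - z)%Z with (- z + NZ J * 1)%Z by ring. rewrite omega_period, <- omega_conj.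
  destruct (omega_pow J z). unfold Cscal, Cconj; simpl. f_equal. ring.
Qed.
Lemma psihat_reflect J r mu z : psihat J r mu (NZ J - z) = Cconj (psihat J r mu z).
Proof.
  unfold psihat. destruct (Nat.eqb mu 0).
  - rewrite beta_reflect. unfold Cconj; simpl. f_equal; ring.
  - apply alpha_reflect.
Qed.
Lemma psihat0_real J r mu : Cconj (psihat J r mu 0) = psihat J r mu 0.
Proof.
  unfold psihat. destruct (Nat.eqb mu 0); [unfold Cconj; simpl; f_equal; ring|].
  unfold alpha. rewrite omega_0. unfold Cscal, Cconj, RtoC; simpl. f_equal. ring.
Qed.

Lemma psihat_hermitian J r mu : hermitian J (psihat J r mu).
Proof.
  intros n Hn. destruct n as [|n].
  - rewrite Nat.sub_0_r, Nat.Div0.mod_same. symmetry; apply psihat0_real.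
  - rewrite Nat.mod_small, Nat2Z.inj_sub by lia. apply psihat_reflect.
Qed.

Lemma phihat_nat J r mu n : (n < Nn J)%nat ->
  phihat J r mu (Z.of_nat n) =
  if andb (Nat.ltb 0 n) (Nat.ltb n (Nhalf J)) then Cmul_negi (psihat J r mu (Z.of_nat n))
  else if Nat.ltb (Nhalf J) n then Cmul_i (psihat J r mu (Z.of_nat n))
  else psihat J r mu (Z.of_nat n).
Proof.
  intros Hn. unfold phihat; cbv zeta. rewrite Z.mod_small by (unfold NZ; lia).
  assert (ltb_Z : forall a b, (Z.of_nat a <? Z.of_nat b)%Z = Nat.ltb a b).
  { intros a b. destruct (Nat.ltb_spec a b), (Z.ltb_spec (Z.of_nat a) (Z.of_nat b)); auto; lia. }
  change 0%Z with (Z.of_nat 0). now rewrite !ltb_Z.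
Qed.

Lemma phihat_hermitian J r mu : (1 <= J)%nat -> hermitian J (phihat J r mu).
Proof.
  intros HJ n Hn. pose proof (Nn_half J HJ). pose proof (Nhalf_pos J HJ).
  destruct n as [|n].
  - rewrite Nat.sub_0_r, Nat.Div0.mod_same, phihat_nat by lia. simpl.
    destruct (Nat.ltb_spec (Nhalf J) 0); [lia|]. symmetry; apply psihat0_real.
  - rewrite Nat.mod_small, !phihat_nat, Nat2Z.inj_sub by lia.
    change (Z.of_nat (Nn J)) with (NZ J). rewrite psihat_reflect.
    destruct (psihat J r mu (Z.of_nat (S n))) as [p q].
    destruct (Nat.ltb_spec 0 (Nn J - S n)), (Nat.ltb_spec (Nn J - S n) (Nhalf J)),
      (Nat.ltb_spec (Nhalf J) (Nn J - S n)), (Nat.ltb_spec 0 (S n)), (Nat.ltb_spec (S n) (Nhalf J)),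
      (Nat.ltb_spec (Nhalf J) (S n)); simpl; try lia;
    unfold Cmul_negi, Cmul_i, Cconj; simpl; f_equal; ring.
Qed.

Lemma psi_real J r mu k : snd (idft J (psihat J r mu) k) = 0.
Proof. apply idft_real, psihat_hermitian. Qed.
Lemma phi_real J r mu k : (1 <= J)%nat -> snd (idft J (phihat J r mu) k) = 0.
Proof. intros HJ. apply idft_real, phihat_hermitian; auto. Qed.

(* The unimodular factor cancels in cross products of spectra. *)
Lemma phihat_cross J r mu nu n : (n < Nn J)%nat ->
  Cmult (phihat J r mu (Z.of_nat n)) (Cconj (phihat J r nu (Z.of_nat n))) =
  Cmult (psihat J r mu (Z.of_nat n)) (Cconj (psihat J r nu (Z.of_nat n))).
Proof.
  intros Hn. rewrite !phihat_nat by auto.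
  destruct (psihat J r mu (Z.of_nat n)) as [a b], (psihat J r nu (Z.of_nat n)) as [c d].
  destruct (andb _ _); [|destruct (Nat.ltb _ _)];
    unfold Cmul_negi, Cmul_i, Cconj, Cmult; simpl; f_equal; ring.
Qed.

Lemma phi_gram J r mu mu' l l' : (1 <= J)%nat ->
  ip J (shift2 (phi J r mu) l) (shift2 (phi J r mu') l') =
  ip J (shift2 (psi J r mu) l) (shift2 (psi J r mu') l').
Proof.
  intros HJ. unfold ip, shift2, phi, psi.
  rewrite !parseval by (intros; apply phi_real || apply psi_real; auto).
  do 2 f_equal. apply csum_ext. intros n Hn. rewrite phihat_cross; auto.
Qed.

Lemma phi_shift_periodic J r mu l : periodic J (shift2 (phi J r mu) l).
Proof.
  intros k. unfold shift2, phi.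
  replace (k + NZ J - 2 * Z.of_nat l)%Z with ((k - 2 * Z.of_nat l) + NZ J)%Z by ring.
  now rewrite idft_period.
Qed.

Lemma angle_0 J : PI * IZR 0 / NR J = 0.
Proof. simpl. field. apply Rgt_not_eq, NR_pos. Qed.
Lemma angle_half J : (1 <= J)%nat -> PI * IZR (Z.of_nat (Nhalf J)) / NR J = PI / 2.
Proof.
  intros HJ. unfold NR. rewrite (Nn_half J HJ), <- INR_IZR_INZ, mult_INR. simpl. field.
  pose proof (Nhalf_pos J HJ). apply Rgt_not_eq, lt_0_INR; lia.
Qed.
Lemma inv_sqrt_half : / sqrt (/ 2) = sqrt 2.
Proof. rewrite sqrt_inv, Rinv_inv. auto. Qed.
Lemma Ufun_0 J r : (1 <= r)%nat -> Ufun J r 0 = / 2.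
Proof. intros Hr. unfold Ufun. rewrite angle_0, cos_0, sin_0, pow1, pow_i by lia. ring. Qed.
Lemma Ufun_half J r : (1 <= J)%nat -> (1 <= r)%nat -> Ufun J r (Z.of_nat (Nhalf J)) = / 2.
Proof.
  intros HJ Hr. unfold Ufun. rewrite angle_half, cos_PI2, sin_PI2, pow1, pow_i by lia. ring.
Qed.
Lemma Nhalf_lt J : (1 <= J)%nat -> (Nhalf J < Nn J)%nat.
Proof. intros HJ. pose proof (Nhalf_pos J HJ). pose proof (Nn_half J HJ). lia. Qed.

Lemma phihat_0_0 J r : (1 <= r)%nat -> phihat J r 0 0%Z = (sqrt 2, 0).
Proof.
  intros Hr. change 0%Z with (Z.of_nat 0). rewrite (phihat_nat J r 0 0) by apply Nn_pos. simpl.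
  destruct (Nat.ltb_spec (Nhalf J) 0); [lia|]. unfold psihat, beta; simpl.
  rewrite Ufun_0, angle_0, cos_0, pow1 by auto. unfold Rdiv. rewrite inv_sqrt_half. f_equal; ring.
Qed.
Lemma phihat_0_half J r : (1 <= J)%nat -> (1 <= r)%nat -> phihat J r 0 (Z.of_nat (Nhalf J)) = (0, 0).
Proof.
  intros HJ Hr. rewrite phihat_nat by (apply Nhalf_lt; auto).
  rewrite Nat.ltb_irrefl, Bool.andb_false_r. unfold psihat, beta; simpl.
  rewrite angle_half, cos_PI2, pow_i by lia. f_equal. unfold Rdiv; ring.
Qed.
Lemma phihat_1_0 J r : (1 <= r)%nat -> phihat J r 1 0%Z = (0, 0).
Proof.
  intros Hr. change 0%Z with (Z.of_nat 0). rewrite (phihat_nat J r 1 0) by apply Nn_pos. simpl.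
  destruct (Nat.ltb_spec (Nhalf J) 0); [lia|]. unfold psihat, alpha; simpl.
  rewrite angle_0, sin_0, pow_i by lia. unfold Cscal. f_equal; unfold Rdiv; ring.
Qed.
Lemma phihat_1_half J r : (1 <= J)%nat -> (1 <= r)%nat ->
  phihat J r 1 (Z.of_nat (Nhalf J)) = (- sqrt 2, 0).
Proof.
  intros HJ Hr. rewrite phihat_nat by (apply Nhalf_lt; auto).
  rewrite Nat.ltb_irrefl, Bool.andb_false_r. unfold psihat, alpha, omega_pow; simpl.
  rewrite angle_half, sin_PI2, pow1, Ufun_half by auto. unfold Rdiv. rewrite Rmult_1_l, inv_sqrt_half.
  replace (2 * PI * IZR (Z.of_nat (Nhalf J)) * / NR J)
    with (2 * (PI * IZR (Z.of_nat (Nhalf J)) / NR J)) by (unfold Rdiv; ring).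
  rewrite angle_half by auto. replace (2 * (PI / 2)) with PI by field.
  unfold cis, Cscal; simpl. rewrite cos_PI, sin_PI. f_equal; ring.
Qed.

Lemma ip_ext J x x' y y' :
  (forall k, x k = x' k) -> (forall k, y k = y' k) -> ip J x y = ip J x' y'.
Proof. intros H1 H2. unfold ip. apply rsum_ext. intros. now rewrite H1, H2. Qed.
Lemma ip_comm J x y : ip J x y = ip J y x.
Proof. unfold ip. apply rsum_ext; intros; ring. Qed.
Lemma ip_lin_r J x n c y :
  ip J x (fun k => rsum n (fun i => c i * y i k)) = rsum n (fun i => c i * ip J x (y i)).
Proof.
  unfold ip. rewrite (rsum_ext _ _ (fun k => rsum n (fun i => c i * (x (Z.of_nat k) * y i (Z.of_nat k))))).
  - rewrite rsum_swap. apply rsum_ext; intros. now rewrite rsum_scal.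
  - intros k _. rewrite <- rsum_scal. apply rsum_ext; intros; ring.
Qed.
Lemma ip_lin_l J y n c x :
  ip J (fun k => rsum n (fun i => c i * x i k)) y = rsum n (fun i => c i * ip J (x i) y).
Proof. rewrite ip_comm, ip_lin_r. apply rsum_ext; intros; now rewrite ip_comm. Qed.
Lemma ip_add_r J x u v : ip J x (fun k => u k + v k) = ip J x u + ip J x v.
Proof. unfold ip. rewrite <- rsum_add. apply rsum_ext; intros; ring. Qed.
Lemma ip_sub_l J u v y : ip J (fun k => u k - v k) y = ip J u y - ip J v y.
Proof.
  unfold ip. replace (rsum (Nn J) (fun k => u (Z.of_nat k) * y (Z.of_nat k)) - _)
    with (rsum (Nn J) (fun k => u (Z.of_nat k) * y (Z.of_nat k))
          + - 1 * rsum (Nn J) (fun k => v (Z.of_nat k) * y (Z.of_nat k))) by ring.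
  rewrite <- rsum_scal, <- rsum_add. apply rsum_ext; intros; ring.
Qed.

Definition orthonormal (J M : nat) (b : nat -> Z -> R) : Prop :=
  forall i j, (i < M)%nat -> (j < M)%nat -> ip J (b i) (b j) = if Nat.eqb i j then 1 else 0.
Definition spanned_by (M : nat) (b : nat -> Z -> R) (x : Z -> R) : Prop :=
  exists a : nat -> R, forall k, x k = rsum M (fun i => a i * b i k).

Lemma orthonormal_coordinate J M b a x : orthonormal J M b ->
  (forall k, x k = rsum M (fun i => a i * b i k)) -> forall i, (i < M)%nat -> ip J (b i) x = a i.
Proof.
  intros Hb Hx i Hi. rewrite (ip_ext J _ (b i) _ _ (fun _ => eq_refl) Hx), ip_lin_r.
  rewrite (rsum_ext _ _ (fun j => a j * (if Nat.eqb i j then 1 else 0))).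
  - now apply rsum_kronecker.
  - intros j Hj. now rewrite Hb.
Qed.

Lemma orthonormal_expansion J M b x : orthonormal J M b -> spanned_by M b x ->
  forall k, x k = rsum M (fun i => ip J (b i) x * b i k).
Proof.
  intros Hb [a Ha] k. rewrite (Ha k). apply rsum_ext. intros i Hi.
  now rewrite (orthonormal_coordinate J M b a x Hb Ha).
Qed.

(* If the M orthonormal vectors c j lie in the span of the M orthonormal vectors b i, then the
   matrix A i j = <b i, c j> has orthonormal columns, hence orthonormal rows, and each b i is
   recovered as sum_j A i j c j. *)
Lemma orthonormal_square_expansion J M b c :
  orthonormal J M b -> orthonormal J M c -> (forall j, (j < M)%nat -> spanned_by M b (c j)) ->
  forall i, (i < M)%nat -> forall k, b i k = rsum M (fun j => ip J (b i) (c j) * c j k).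
Proof.
  intros Hb Hc Hcb.
  set (A := fun i j => ip J (b i) (c j)).
  assert (Hcexp : forall j, (j < M)%nat -> forall k, c j k = rsum M (fun i => A i j * b i k))
    by (intros; now apply orthonormal_expansion; auto).
  assert (Hcols : forall j j', (j < M)%nat -> (j' < M)%nat ->
            rsum M (fun i => A i j * A i j') = if Nat.eqb j j' then 1 else 0).
  { intros j j' Hj Hj'. rewrite <- Hc by auto.
    rewrite (ip_ext J (c j) _ (c j') (c j') (Hcexp j Hj) (fun _ => eq_refl)).
    now rewrite ip_lin_l. }
  assert (Hrows := SquareMatrix.rows_orthonormal M A Hcols).
  intros i Hi k. symmetry.
  rewrite (rsum_ext _ _ (fun j => rsum M (fun i' => A i j * A i' j * b i' k))).
  - rewrite rsum_swap, (rsum_ext _ _ (fun i' => b i' k * (if Nat.eqb i i' then 1 else 0))).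
    + now apply rsum_kronecker.
    + intros i' Hi'. rewrite <- Hrows, <- rsum_scal by auto. apply rsum_ext; intros; ring.
  - intros j Hj. rewrite (Hcexp j Hj), <- rsum_scal. apply rsum_ext; intros; unfold A; ring.
Qed.

Lemma spanned_by_subst M b c e x : spanned_by M b x ->
  (forall i, (i < M)%nat -> forall k, b i k = rsum M (fun j => e i j * c j k)) ->
  spanned_by M c x.
Proof.
  intros [a Ha] Hbc. exists (fun j => rsum M (fun i => a i * e i j)). intros k. rewrite Ha.
  rewrite (rsum_ext _ _ (fun i => rsum M (fun j => a i * e i j * c j k))).
  - rewrite rsum_swap. apply rsum_ext; intros j _.
    rewrite Rmult_comm, <- rsum_scal. apply rsum_ext; intros; ring.
  - intros i Hi. rewrite (Hbc i Hi), <- rsum_scal. apply rsum_ext; intros; ring.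
Qed.

Definition shifts_orthonormal (J : nat) (f : nat -> Z -> R) : Prop :=
  forall mu mu' l l', (mu <= 1)%nat -> (mu' <= 1)%nat ->
    (l < Nhalf J)%nat -> (l' < Nhalf J)%nat ->
    ip J (shift2 (f mu) l) (shift2 (f mu') l') =
      (if andb (Nat.eqb mu mu') (Nat.eqb l l') then 1 else 0).

(* The shifts f mu [. - 2l], mu in {0,1}, l < N/2, as one family indexed by i = mu N/2 + l. *)
Definition flatten2 (J : nat) (f : nat -> Z -> R) (i : nat) : Z -> R :=
  shift2 (f (i / Nhalf J)%nat) (i mod Nhalf J).

Lemma index_low h i : (i < h)%nat -> (i / h = 0 /\ i mod h = i)%nat.
Proof. intros H. split; [apply Nat.div_small | apply Nat.mod_small]; auto. Qed.
Lemma index_high h i : (i < h)%nat -> ((h + i) / h = 1 /\ (h + i) mod h = i)%nat.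
Proof.
  intros H. replace (h + i)%nat with (i + 1 * h)%nat by lia. split.
  - rewrite Nat.div_add, Nat.div_small; lia.
  - rewrite Nat.Div0.mod_add. now apply Nat.mod_small.
Qed.
Lemma index_bound h i : (i < h + h)%nat -> (i / h <= 1 /\ i mod h < h)%nat.
Proof.
  intros H. split.
  - apply Nat.lt_succ_r, Nat.Div0.div_lt_upper_bound. lia.
  - apply Nat.mod_upper_bound; lia.
Qed.
Lemma index_eqb h i j : (i < h + h)%nat -> (j < h + h)%nat ->
  andb (Nat.eqb (i / h) (j / h)) (Nat.eqb (i mod h) (j mod h)) = Nat.eqb i j.
Proof.
  intros Hi Hj.
  pose proof (Nat.div_mod i h ltac:(lia)). pose proof (Nat.div_mod j h ltac:(lia)).
  destruct (Nat.eqb_spec (i / h) (j / h)), (Nat.eqb_spec (i mod h) (j mod h)),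
    (Nat.eqb_spec i j); simpl; auto; subst; congruence.
Qed.

Lemma flatten2_orthonormal J f : (0 < Nhalf J)%nat -> shifts_orthonormal J f ->
  orthonormal J (Nhalf J + Nhalf J) (flatten2 J f).
Proof.
  intros Hh Hf i j Hi Hj. destruct (index_bound _ i Hi), (index_bound _ j Hj).
  unfold flatten2. now rewrite Hf, index_eqb.
Qed.

Lemma rsum_flatten2 J f a k :
  rsum (Nhalf J + Nhalf J) (fun i => a i * flatten2 J f i k) =
  rsum (Nhalf J) (fun l => a l * shift2 (f 0%nat) l k)
  + rsum (Nhalf J) (fun l => a (Nhalf J + l)%nat * shift2 (f 1%nat) l k).
Proof.
  rewrite rsum_split. unfold flatten2. f_equal; apply rsum_ext; intros i Hi.
  - now destruct (index_low _ i Hi) as [-> ->].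
  - now destruct (index_high _ i Hi) as [-> ->].
Qed.

Lemma onb_transfer J P Q : (0 < Nhalf J)%nat -> is_ONB2 J P ->
  (forall mu l, (mu <= 1)%nat -> periodic J (shift2 (Q mu) l)) ->
  shifts_orthonormal J Q -> is_ONB2 J Q.
Proof.
  intros Hh [_ [HPorth HPspan]] HQper HQorth.
  split; [exact HQper | split; [exact HQorth |]].
  set (M := (Nhalf J + Nhalf J)%nat).
  assert (HPspan' : forall x, periodic J x -> spanned_by M (flatten2 J P) x).
  { intros x Hx. destruct (HPspan x Hx) as [c0 [c1 Hc]].
    exists (fun i => if Nat.ltb i (Nhalf J) then c0 i else c1 (i - Nhalf J)%nat).
    intros k. unfold M. rewrite Hc, rsum_flatten2.
    f_equal; apply rsum_ext; intros l Hl.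
    - destruct (Nat.ltb_spec l (Nhalf J)); [auto | lia].
    - destruct (Nat.ltb_spec (Nhalf J + l) (Nhalf J)); [lia|].
      now replace (Nhalf J + l - Nhalf J)%nat with l by lia. }
  assert (HQinP : forall j, (j < M)%nat -> spanned_by M (flatten2 J P) (flatten2 J Q j)).
  { intros j Hj. apply HPspan', HQper. now apply index_bound. }
  intros x Hx.
  destruct (spanned_by_subst M _ _ _ x (HPspan' x Hx)
             (orthonormal_square_expansion J M _ _ (flatten2_orthonormal J P Hh HPorth)
                (flatten2_orthonormal J Q Hh HQorth) HQinP)) as [d Hd].
  exists d, (fun l => d (Nhalf J + l)%nat). intros k. unfold M in Hd. now rewrite Hd, rsum_flatten2.
Qed.

Definition shift_span (J : nat) (g : Z -> R) (x : Z -> R) : Prop :=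
  exists c : nat -> R, forall k, x k = rsum (Nhalf J) (fun l => c l * shift2 g l k).
Definition shift_projection (J : nat) (g x : Z -> R) (k : Z) : R :=
  rsum (Nhalf J) (fun l => ip J (shift2 g l) x * shift2 g l k).

Section ShiftBasis.
Variables (J : nat) (f : nat -> Z -> R).
Hypothesis f_orth : shifts_orthonormal J f.

Lemma ip_shift_combination mu nu c l : (mu <= 1)%nat -> (nu <= 1)%nat -> (l < Nhalf J)%nat ->
  ip J (shift2 (f mu) l) (fun k => rsum (Nhalf J) (fun l' => c l' * shift2 (f nu) l' k)) =
  if Nat.eqb mu nu then c l else 0.
Proof.
  intros Hmu Hnu Hl. rewrite ip_lin_r.
  rewrite (rsum_ext _ _ (fun l' => (if Nat.eqb mu nu then c l' else 0) * (if Nat.eqb l l' then 1 else 0))).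
  - rewrite rsum_kronecker by auto. reflexivity.
  - intros l' Hl'. rewrite f_orth by auto.
    destruct (Nat.eqb mu nu), (Nat.eqb l l'); simpl; ring.
Qed.

Lemma shift_in_span mu l : (l < Nhalf J)%nat -> shift_span J (f mu) (shift2 (f mu) l).
Proof.
  intros Hl. exists (fun l' => if Nat.eqb l l' then 1 else 0). intros k.
  rewrite (rsum_ext _ _ (fun l' => shift2 (f mu) l' k * (if Nat.eqb l l' then 1 else 0))).
  - symmetry. now apply (rsum_kronecker _ (fun l' => shift2 (f mu) l' k)).
  - intros; ring.
Qed.

Lemma spans_orthogonal mu nu x y : (mu <= 1)%nat -> (nu <= 1)%nat -> mu <> nu ->
  shift_span J (f mu) x -> shift_span J (f nu) y -> ip J x y = 0.
Proof.
  intros Hmu Hnu Hne [c Hc] [d Hd].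
  rewrite (ip_ext J _ _ _ _ Hc Hd), ip_lin_l, (rsum_ext _ _ (fun _ => 0)); [apply rsum_zero|].
  intros l Hl. rewrite ip_shift_combination by auto.
  destruct (Nat.eqb_spec mu nu); [contradiction | ring].
Qed.

Lemma projection_residual_orthogonal mu x y : (mu <= 1)%nat -> shift_span J (f mu) y ->
  ip J (fun k => x k - shift_projection J (f mu) x k) y = 0.
Proof.
  intros Hmu [d Hd].
  rewrite (ip_ext J _ _ _ _ (fun _ => eq_refl) Hd), ip_lin_r, (rsum_ext _ _ (fun _ => 0));
    [apply rsum_zero|].
  intros l Hl. rewrite ip_sub_l, (ip_comm J (shift_projection _ _ _)).
  unfold shift_projection. rewrite ip_shift_combination, Nat.eqb_refl, ip_comm by auto. ring.
Qed.

Hypothesis f_spans : forall x, periodic J x -> exists c0 c1 : nat -> R, forall k,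
  x k = rsum (Nhalf J) (fun l => c0 l * shift2 (f 0%nat) l k)
      + rsum (Nhalf J) (fun l => c1 l * shift2 (f 1%nat) l k).

Lemma orthogonal_complement_span x : periodic J x ->
  (forall y, shift_span J (f 0%nat) y -> ip J x y = 0) -> shift_span J (f 1%nat) x.
Proof.
  intros Hx Horth. destruct (f_spans x Hx) as [c0 [c1 Hc]].
  assert (Hc0 : forall l, (l < Nhalf J)%nat -> c0 l = 0).
  { intros l Hl. rewrite <- (Horth _ (shift_in_span 0 l Hl)), ip_comm.
    rewrite (ip_ext J _ _ _ _ (fun _ => eq_refl) Hc), ip_add_r, !ip_shift_combination by auto.
    simpl. ring. }
  exists c1. intros k. rewrite Hc, (rsum_ext _ _ (fun _ => 0)), rsum_zero; [ring|].
  intros l Hl. rewrite Hc0 by auto. ring.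
Qed.

End ShiftBasis.

Theorem proposition4p1 (J r : nat) (HJ : (1 <= J)%nat) (Hr : (1 <= r)%nat)
  (Hpsi : is_ONB2 J (psi J r)) :
  (forall mu k, (mu <= 1)%nat -> snd (idft J (phihat J r mu) k) = 0) /\
  phihat J r 0 0%Z = (sqrt 2, 0) /\
  phihat J r 0 (Z.of_nat (Nhalf J)) = (0, 0) /\
  phihat J r 1 0%Z = (0, 0) /\
  phihat J r 1 (Z.of_nat (Nhalf J)) = (- sqrt 2, 0) /\
  is_ONB2 J (phi J r) /\
  (forall x : Z -> R, periodic J x ->
     (in_C J r 1 x <-> (forall y, in_C J r 0 y -> ip J x y = 0))) /\
  (forall (mu : nat) (x : Z -> R), (mu <= 1)%nat -> periodic J x ->
     in_C J r mu (proj J r mu x) /\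
     (forall y, in_C J r mu y -> ip J (fun k => x k - proj J r mu x k) y = 0)).
Proof.
  (* the phi-shifts have the Gram matrix of the psi-shifts, hence form an orthonormal basis *)
  assert (Hphi_orth : shifts_orthonormal J (phi J r)).
  { intros mu mu' l l' ? ? ? ?. rewrite phi_gram by auto. now apply Hpsi. }
  assert (Hphi : is_ONB2 J (phi J r))
    by (apply (onb_transfer J (psi J r)); auto using Nhalf_pos, phi_shift_periodic).
  do 6 (split; [auto using phi_real, phihat_0_0, phihat_0_half, phihat_1_0, phihat_1_half |]).
  (* in_C and proj are shift_span and shift_projection for g = phi_mu, up to conversion *)
  split.
  - intros x Hx. split.
    + intros Hx1 y Hy. apply (spans_orthogonal J (phi J r) Hphi_orth 1 0); auto.
    + apply (orthogonal_complement_span J (phi J r) Hphi_orth (proj2 (proj2 Hphi)) x Hx).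
  - intros mu x Hmu Hx. split.
    + exists (coef J r mu x). reflexivity.
    + intros y Hy. exact (projection_residual_orthogonal J (phi J r) Hphi_orth mu x y Hmu Hy).
Qed.
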